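(* For every integer $t \ge 4$, there exists a doubly saturated $R(4,t)$-good graph on $6t-11$ vertices.
   Context: All graphs are finite and simple. For integers $s,t$, a graph $G$ is \emph{$R(s,t)$-good} if $G$ contains no clique of size $s$ and no independent set of size $t$. A graph $G$ is \emph{doubly saturated $R(s,t)$-good} if (i) $G$ is $R(s,t)$-good; (ii) for every pair of non-adjacent distinct vertices $u,v$, the graph $G + uv$ is not $R(s,t)$-good; (iii) for every edge $uv$ of $G$, the graph $G - uv$ is not $R(s,t)$-good; and (iv) $G$ is neither a complete graph nor an edgeless graph (equivalently, neither $G$ nor its complement $\overline{G}$ is complete). *)

From mathcomp Require Import all_boot.
Set Implicit Arguments. Unset Strict Implicit. Unset Printing Implicit Defensive.

Definition simple_graph (T : finType) (e : rel T) : Prop :=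
  irreflexive e /\ symmetric e.

Definition is_clique (T : finType) (e : rel T) (S : {set T}) : Prop :=
  forall x y, x \in S -> y \in S -> x != y -> e x y.

Definition is_indep (T : finType) (e : rel T) (S : {set T}) : Prop :=
  forall x y, x \in S -> y \in S -> x != y -> ~~ e x y.

Definition Rgood (T : finType) (s t : nat) (e : rel T) : Prop :=
  (forall S : {set T}, #|S| = s -> ~ is_clique e S) /\
  (forall S : {set T}, #|S| = t -> ~ is_indep e S).

Definition add_edge (T : finType) (e : rel T) (u v : T) : rel T :=
  fun x y => e x y || ((x == u) && (y == v)) || ((x == v) && (y == u)).
Definition del_edge (T : finType) (e : rel T) (u v : T) : rel T :=
  fun x y => e x y && ~~ (((x == u) && (y == v)) || ((x == v) && (y == u))).

Definition doubly_saturated (T : finType) (s t : nat) (e : rel T) : Prop :=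
  [/\ Rgood s t e,
      (forall u v, u != v -> ~~ e u v -> ~ Rgood s t (add_edge e u v)),
      (forall u v, e u v -> ~ Rgood s t (del_edge e u v)),
      (exists u v, u != v /\ ~~ e u v) &
      (* complement of G is not complete, i.e. G has an edge *)
      (exists u v, e u v)].

From mathcomp Require Import all_boot order zify.
Set Implicit Arguments. Unset Strict Implicit. Unset Printing Implicit Defensive.

(* With t = m + 2, the graph is the circulant graph on Z/(6m+1) whose edges join
   vertices at circular distance m or at a distance in [2m+1, 3m].  An independent set lies in a window of 2m+1 consecutive residues
   containing no two at distance m; the classes {z, z+m} (z < m) and {2m} then bound
   its size by m+1.  By vertex-transitivity it suffices to saturate the pairs
   {b, b+d}: for a non-edge an explicit K4 through b and b+d appears, and for an
   edge an explicit independent set of size m+2 containing b and b+d. *)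

Lemma eq_is_clique (T : finType) (e e' : rel T) (S : {set T}) :
  e =2 e' -> is_clique e S -> is_clique e' S.
Proof. by move=> ee' K x y xS yS xy; rewrite -ee'; apply: K. Qed.

Lemma eq_is_indep (T : finType) (e e' : rel T) (S : {set T}) :
  e =2 e' -> is_indep e S -> is_indep e' S.
Proof. by move=> ee' I x y xS yS xy; rewrite -ee'; apply: I. Qed.

Lemma add_edgeC (T : finType) (e : rel T) u v : add_edge e u v =2 add_edge e v u.
Proof. by move=> x y; rewrite /add_edge orbAC. Qed.

Lemma del_edgeC (T : finType) (e : rel T) u v : del_edge e u v =2 del_edge e v u.
Proof. by move=> x y; rewrite /del_edge orbC. Qed.

Lemma add_edge_sym (T : finType) (e : rel T) u v :
  symmetric e -> symmetric (add_edge e u v).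
Proof.
by move=> e_sym x y; rewrite /add_edge e_sym (andbC (x == u)) (andbC (x == v)) orbAC.
Qed.

Lemma del_edge_sym (T : finType) (e : rel T) u v :
  symmetric e -> symmetric (del_edge e u v).
Proof.
by move=> e_sym x y; rewrite /del_edge e_sym (andbC (x == u)) (andbC (x == v)) orbC.
Qed.

Lemma clique_ltn n (e : rel 'I_n) (S : {set 'I_n}) x y :
  is_clique e S -> x \in S -> y \in S -> x < y -> e x y.
Proof. by move=> K xS yS xy; apply: K => //; rewrite neq_ltn xy. Qed.

Lemma indep_ltn n (e : rel 'I_n) (S : {set 'I_n}) x y :
  is_indep e S -> x \in S -> y \in S -> x < y -> ~~ e x y.
Proof. by move=> I xS yS xy; apply: I => //; rewrite neq_ltn xy. Qed.

Lemma card4_increasing n (S : {set 'I_n}) : #|S| = 4 ->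
  exists a b c d, [/\ [/\ a \in S, b \in S, c \in S & d \in S], a < b, b < c & c < d].
Proof.
move=> S4; have: sorted <%O (sort <=%O (enum S)).
  by rewrite Order.TotalTheory.sort_lt_sorted enum_uniq.
have: {subset sort <=%O (enum S) <= S} by move=> x; rewrite mem_sort mem_enum.
have: size (sort <=%O (enum S)) = 4 by rewrite size_sort -cardE.
case: (sort <=%O (enum S)) => [|a [|b [|c [|d [|? ?]]]]] //= _ sS /and4P[ab bc cd _].
by exists a, b, c, d; split; rewrite ?sS ?inE ?eqxx ?orbT.
Qed.

Lemma card_le_window_gap (T : finType) (A : {set T}) (f : T -> nat) m :
  {in A, forall x, f x <= 2 * m} -> {in A &, injective f} ->
  {in A &, forall x y, f x + m != f y} -> #|A| <= m.+1.
Proof.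
move=> f_le f_inj f_gap.
pose cls z := if z < m then z else if z < 2 * m then z - m else m.
have cls_lt z : cls z < m.+1 by rewrite /cls; do ?case: ifP; lia.
pose c x : 'I_m.+1 := inord (cls (f x)).
have c_inj : {in A &, injective c}.
  move=> x y xA yA /(congr1 (@nat_of_ord _)); rewrite /c !inordK // => E; apply: f_inj => //.
  have := f_le x xA; have := f_le y yA; have := f_gap x y xA yA; have := f_gap y x yA xA.
  by move: E; rewrite /cls; do ?case: ifP; lia.
by rewrite -(card_in_imset c_inj) (leq_trans (max_card _)) ?card_ord.
Qed.

Section Circulant.

Variables (N : nat) (ok : nat -> bool).

Definition circulant : rel 'I_N :=
  fun x y : 'I_N => ((x < y) && ok (y - x)) || ((y < x) && ok (x - y)).

Lemma circulant_sym : symmetric circulant.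
Proof. by move=> x y; rewrite /circulant orbC. Qed.

Lemma circulant_irr : irreflexive circulant.
Proof. by move=> x; rewrite /circulant ltnn. Qed.

Lemma circulant_lt (x y : 'I_N) : x < y -> circulant x y = ok (y - x).
Proof. by move=> xy; rewrite /circulant xy ltnNge (ltnW xy) orbF. Qed.

Hypothesis N_gt0 : 0 < N.

Definition rot (b : 'I_N) (k : nat) : 'I_N := Ordinal (ltn_pmod (b + k) N_gt0).

Definition offset (b x : 'I_N) : nat := if b <= x then x - b else x + N - b.

Lemma rot_val (b : 'I_N) k : k < N ->
  (b + k < N /\ rot b k = b + k :> nat) \/ (N <= b + k /\ rot b k + N = b + k :> nat).
Proof.
move=> kN /=; have bN := ltn_ord b.
have [bk|bk] := ltnP (b + k) N; [left | right]; split=> //; first exact: modn_small.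
have {1}-> : b + k = b + k - N + N by rewrite subnK.
by rewrite modnDr modn_small; lia.
Qed.

Lemma rot0 (b : 'I_N) : rot b 0 = b.
Proof. by apply: val_inj; rewrite /= addn0 modn_small. Qed.

Lemma rot_inj (b : 'I_N) i j : i < N -> j < N -> rot b i = rot b j -> i = j.
Proof.
by move=> iN jN /(congr1 (@nat_of_ord _)); have := rot_val b iN; have := rot_val b jN; lia.
Qed.

Lemma offset_val (b x : 'I_N) :
  (b <= x /\ offset b x = x - b) \/ (x < b /\ offset b x = x + N - b).
Proof. by rewrite /offset; case: leqP; [left | right]. Qed.

Lemma offset_lt (b x : 'I_N) : offset b x < N.
Proof. by have := offset_val b x; have := ltn_ord b; have := ltn_ord x; lia. Qed.

Lemma rot_offset (b x : 'I_N) : rot b (offset b x) = x.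
Proof.
apply: ord_inj; have := rot_val b (offset_lt b x); have := offset_val b x.
by have := ltn_ord b; have := ltn_ord x; lia.
Qed.

Lemma rot_pair (u v : 'I_N) : u != v -> exists b d,
  [/\ 0 < d, 2 * d <= N & (u = b /\ v = rot b d) \/ (v = b /\ u = rot b d)].
Proof.
move=> uv; have d_gt0 : 0 < offset u v.
  by rewrite lt0n; apply: contraNneq uv => d0; rewrite -[v](rot_offset u) d0 rot0.
have d_lt := offset_lt u v.
have [small|large] := leqP (2 * offset u v) N.
  by exists u, (offset u v); split=> //; left; rewrite rot_offset.
have dN : N - offset u v < N by lia.
exists v, (N - offset u v); split; [lia | lia | right; split=> //].
apply: ord_inj; have := rot_val v dN; have := offset_val u v.
by have := ltn_ord u; have := ltn_ord v; lia.
Qed.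

Hypothesis ok_sym : forall d, 0 < d < N -> ok (N - d) = ok d.

Lemma circulant_rot (b : 'I_N) i j : i < j < N -> circulant (rot b i) (rot b j) = ok (j - i).
Proof.
case/andP=> ij jN; have iN := ltn_trans ij jN.
have [[_ Ei]|[wi Ei]] := rot_val b iN; have [[wj Ej]|[wj Ej]] := rot_val b jN.
- by rewrite circulant_lt; [have -> : rot b j - rot b i = j - i by lia | lia].
- rewrite circulant_sym circulant_lt; last by lia.
  by rewrite -(@ok_sym (j - i)); [have -> : rot b i - rot b j = N - (j - i) by lia | lia].
- by lia.
- by rewrite circulant_lt; [have -> : rot b j - rot b i = j - i by lia | lia].
Qed.

Lemma circulant_rot0 (b : 'I_N) d : 0 < d < N -> circulant b (rot b d) = ok d.
Proof. by move=> dN; rewrite -{1}(rot0 b) circulant_rot ?subn0. Qed.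

Lemma circulant_offset (a x y : 'I_N) :
  offset a x < offset a y -> circulant x y = ok (offset a y - offset a x).
Proof.
by move=> lt_xy; rewrite -{1}[x](rot_offset a) -{1}[y](rot_offset a) circulant_rot ?lt_xy ?offset_lt.
Qed.

Definition rot_set b (ds : seq nat) : {set 'I_N} := [set x in map (rot b) ds].

Lemma card_rot_set (b : 'I_N) ds :
  uniq ds -> {in ds, forall i, i < N} -> #|rot_set b ds| = size ds.
Proof.
move=> ds_uniq ds_lt; rewrite cardsE -(size_map (rot b)); apply/card_uniqP.
by rewrite map_inj_in_uniq // => i j iS jS; apply: rot_inj; apply: ds_lt.
Qed.

Lemma rot_set_clique (e : rel 'I_N) (b : 'I_N) ds : symmetric e ->
  {in ds &, forall i j, i < j -> e (rot b i) (rot b j)} -> is_clique e (rot_set b ds).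
Proof.
move=> e_sym e_ds x y; rewrite !inE => /mapP[i iS ->] /mapP[j jS ->] ij.
have [lt_ij|lt_ji|eq_ij] := ltngtP i j.
- exact: e_ds.
- by rewrite e_sym; apply: e_ds.
- by rewrite eq_ij eqxx in ij.
Qed.

Definition clique_offsets (P : pred nat) d k (ds : seq nat) :=
  [/\ uniq ds, size ds = k, {in ds, forall i, i < N} &
      {in ds &, forall i j, i < j -> ~~ ((i == 0) && (j == d)) -> P (j - i)}].

Lemma circulant_add_saturated s t :
  (forall d, 0 < d -> 2 * d <= N -> ~~ ok d -> exists ds, clique_offsets ok d s ds) ->
  forall u v : 'I_N, u != v -> ~~ circulant u v -> ~ Rgood s t (add_edge circulant u v).
Proof.
move=> witness u v uv uv_nonadj [noK _].
have [b [d [d_gt0 dN uv_rot]]] := rot_pair uv.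
have ok_d : ok d = circulant b (rot b d) by rewrite circulant_rot0 // d_gt0; lia.
have [ds [ds_uniq ds_size ds_lt ds_ok]] : exists ds, clique_offsets ok d s ds.
  apply: witness; rewrite // ok_d.
  by case: uv_rot uv_nonadj => [[-> ->] | [-> ->]]; rewrite // circulant_sym.
have K : is_clique (add_edge circulant b (rot b d)) (rot_set b ds).
  apply: rot_set_clique; first exact/add_edge_sym/circulant_sym.
  move=> i j iS jS ij; have [/andP[/eqP-> /eqP->]|not0d] := boolP ((i == 0) && (j == d)).
    by rewrite /add_edge rot0 !eqxx orbT.
  by rewrite /add_edge circulant_rot ?ds_ok ?ij ?ds_lt.
apply: (noK (rot_set b ds)); first by rewrite card_rot_set.
by case: uv_rot => [[-> ->] | [-> ->]] //; apply: eq_is_clique K; apply: add_edgeC.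
Qed.

Lemma circulant_del_saturated s t :
  (forall d, 0 < d -> 2 * d <= N -> ok d -> exists ds, clique_offsets (predC ok) d t ds) ->
  forall u v : 'I_N, circulant u v -> ~ Rgood s t (del_edge circulant u v).
Proof.
move=> witness u v uv_adj [_ noI].
have uv : u != v by apply: contraTneq uv_adj => ->; rewrite circulant_irr.
have [b [d [d_gt0 dN uv_rot]]] := rot_pair uv.
have ok_d : ok d = circulant b (rot b d) by rewrite circulant_rot0 // d_gt0; lia.
have [ds [ds_uniq ds_size ds_lt ds_nok]] : exists ds, clique_offsets (predC ok) d t ds.
  apply: witness; rewrite // ok_d.
  by case: uv_rot uv_adj => [[-> ->] | [-> ->]]; rewrite // circulant_sym.
have I : is_indep (del_edge circulant b (rot b d)) (rot_set b ds).
  apply: (@rot_set_clique [rel x y | ~~ del_edge circulant b (rot b d) x y]).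
    by move=> x y /=; rewrite del_edge_sym //; apply: circulant_sym.
  move=> i j iS jS ij /=; have [/andP[/eqP-> /eqP->]|not0d] := boolP ((i == 0) && (j == d)).
    by rewrite /del_edge rot0 !eqxx andbF.
  rewrite /del_edge negb_and circulant_rot ?ij ?ds_lt //.
  by have /= -> := ds_nok i j iS jS ij not0d.
apply: (noI (rot_set b ds)); first by rewrite card_rot_set.
by case: uv_rot => [[-> ->] | [-> ->]] //; apply: eq_is_indep I; apply: del_edgeC.
Qed.

End Circulant.

(* [connection m] tests the linear difference |x - y| of two vertices, hence contains
   6m+1-d along with each circular distance d. *)
Definition connection m d := [|| d == m, d == 5 * m + 1 | 2 * m + 1 <= d <= 4 * m].

Lemma order_gt0 m : 0 < 6 * m + 1.
Proof. by rewrite addn1. Qed.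

Lemma connection_sym m d : 0 < d < 6 * m + 1 -> connection m (6 * m + 1 - d) = connection m d.
Proof. by rewrite /connection => d_lt; apply/idP/idP; lia. Qed.

Definition G m : rel 'I_(6 * m + 1) := circulant (connection m).
Arguments G : clear implicits.

Lemma G_simple (m : nat) : simple_graph (G m).
Proof. by split; [apply: circulant_irr | apply: circulant_sym]. Qed.

Lemma G_K4_free (m : nat) (S : {set 'I_(6 * m + 1)}) : #|S| = 4 -> ~ is_clique (G m) S.
Proof.
move=> /card4_increasing[a [b [c [d [[aS bS cS dS] ab bc cd]]]]] K.
have conn x y : x \in S -> y \in S -> x < y -> connection m (y - x).
  by move=> xS yS xy; rewrite -circulant_lt //; apply: (clique_ltn K).
have := conn a b aS bS ab; have := conn a c aS cS (ltn_trans ab bc).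
have := conn a d aS dS (ltn_trans ab (ltn_trans bc cd)); have := conn b c bS cS bc.
have := conn b d bS dS (ltn_trans bc cd); have := conn c d cS dS cd.
have := ltn_ord d; rewrite /connection; lia.
Qed.

Lemma G_indep_window m (S : {set 'I_(6 * m + 1)}) x0 :
  0 < m -> x0 \in S -> is_indep (G m) S -> exists a, {in S, forall x, offset a x <= 2 * m}.
Proof.
move=> m_gt0 x0S indS.
have [lo loS lo_min] := @arg_minnP _ x0 (mem S) (@nat_of_ord _) x0S.
have loP : (lo \in S) && (lo <= lo + 2 * m) by rewrite leq_addr andbT.
have [R /andP[RS R_le] R_max] :=
  @arg_maxnP _ lo (fun x => (x \in S) && (x <= lo + 2 * m)) (@nat_of_ord _) loP.
have far y x : y \in S -> x \in S -> y < x -> ~~ connection m (x - y).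
  by move=> yS xS yx; rewrite -circulant_lt //; apply: (indep_ltn indS).
have R4 : 4 * m + 1 < 6 * m + 1 by lia.
(* The window is [R - 2m, R]: an element beyond lo + 2m is at distance more than 4m
   from both lo and R, so it lies at most 2m before R modulo 6m+1. *)
exists (rot (order_gt0 m) R (4 * m + 1)) => x xS.
have x_near : x <= R <= x + 2 * m \/ R + 4 * m + 1 <= x.
  have [x_le|x_gt] := leqP x (lo + 2 * m).
    by have := R_max x; rewrite xS x_le => /(_ isT); have := lo_min x xS; lia.
  have lo_x : lo < x by lia.
  have R_x : R < x by lia.
  have := far lo x loS xS lo_x; have := far R x RS xS R_x; have := ltn_ord x.
  by rewrite /connection; lia.
have := rot_val (order_gt0 m) R R4; have := offset_val (rot (order_gt0 m) R (4 * m + 1)) x.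
by have := ltn_ord x; lia.
Qed.

Lemma G_indep_card m (S : {set 'I_(6 * m + 1)}) : 0 < m -> is_indep (G m) S -> #|S| <= m.+1.
Proof.
move=> m_gt0 indS; have [->|[x0 x0S]] := set_0Vmem S; first by rewrite cards0.
have [a a_win] := G_indep_window m_gt0 x0S indS.
apply: (@card_le_window_gap _ S (offset a)) => // [x y _ _ E|x y xS yS].
  by rewrite -[x](rot_offset (order_gt0 m) a) E rot_offset.
apply/eqP => E; have xy : offset a x < offset a y by lia.
have x_y : x != y by apply: contraTneq xy => ->; rewrite ltnn.
have := indS x y xS yS x_y.
by rewrite /G (circulant_offset (order_gt0 m) (@connection_sym m) xy) -E addKn /connection eqxx.
Qed.

Lemma connection_add_offsets m d : 0 < d -> 2 * d <= 6 * m + 1 -> ~~ connection m d ->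
  exists ds, clique_offsets (6 * m + 1) (connection m) d 4 ds.
Proof.
rewrite /connection => d_gt0 dN d_nconn.
have [d_lt|d_ge] := ltnP d m;
  [exists [:: 0; d; 3 * m; 4 * m] | exists [:: 0; d; d + m; 5 * m + 1]];
  by split=> //= [|i|i j]; rewrite ?inE; lia.
Qed.

Lemma connection_del_offsets m d : 2 <= m -> 0 < d -> 2 * d <= 6 * m + 1 -> connection m d ->
  exists ds, clique_offsets (6 * m + 1) (predC (connection m)) d (m + 2) ds.
Proof.
move=> m_ge2 d_gt0 dN d_conn.
have [->|d_neq_m] := eqVneq d m.
  exists [:: 0, m, 6 * m & iota m.+1 (m - 1)].
  by split=> [||i|i j]; rewrite /= ?inE ?mem_iota ?size_iota ?iota_uniq /connection; lia.
have [->|d_neq_3m] := eqVneq d (3 * m).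
  exists [:: 0, 3 * m & iota (4 * m).+1 m].
  by split=> [||i|i j]; rewrite /= ?inE ?mem_iota ?size_iota ?iota_uniq /connection; lia.
have m_mid : m \in iota (d - 2 * m) m by move: d_conn; rewrite mem_iota /connection; lia.
exists [:: 0, d, 2 * m & rem m (iota (d - 2 * m) m)].
rewrite /clique_offsets /= size_rem // size_iota rem_uniq ?iota_uniq //.
rewrite /connection in d_conn *.
by split=> [||i|i j]; rewrite ?inE ?(mem_rem_uniq _ (iota_uniq _ _)) ?inE ?mem_iota; lia.
Qed.

Lemma G_doubly_saturated m : 2 <= m -> doubly_saturated 4 (m + 2) (G m).
Proof.
move=> m_ge2; have m_gt0 : 0 < m by lia.
split.
- split=> S S_card; first exact: G_K4_free.
  by move=> /(G_indep_card m_gt0); rewrite S_card addn2 ltnn.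
- apply: (circulant_add_saturated (order_gt0 m) (@connection_sym m)) => d d_gt0 dN.
  exact: connection_add_offsets.
- apply: (circulant_del_saturated (order_gt0 m) (@connection_sym m)) => d d_gt0 dN.
  exact: connection_del_offsets.
- have lt0 := order_gt0 m; have lt1 : 1 < 6 * m + 1 by lia.
  exists (Ordinal lt0), (Ordinal lt1); split=> //.
  by rewrite /G circulant_lt //= /connection; lia.
- have lt0 := order_gt0 m; have ltm : m < 6 * m + 1 by lia.
  by exists (Ordinal lt0), (Ordinal ltm); rewrite /G circulant_lt //= /connection subn0 eqxx.
Qed.

Theorem theorem1 (t : nat) : 4 <= t ->
  exists e : rel 'I_(6 * t - 11),
    simple_graph e /\ doubly_saturated 4 t e.
Proof.
move=> t_ge4; have [m t_eq] : exists m, t = m + 2 by exists (t - 2); lia.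
rewrite t_eq (_ : 6 * (m + 2) - 11 = 6 * m + 1); last by lia.
by exists (G m); split; [exact: G_simple | apply: G_doubly_saturated; lia].
Qed.
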